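(* Let $\Lambda=(\alpha,\lambda,f)$ be a Sieben twisted $S$-module structure on a semilattice of groups $A$ over an inverse semigroup $S$. Then the twisted $S$-module structure induced by the transversal $\rho(s)=\alpha(ss^{-1})\delta_s$ of the extension $A\overset{i}{\to}A*_\Lambda S\overset{j}{\to}S$ is $\Lambda$ itself.
   Context: A semilattice of groups is an inverse semigroup $A$ whose idempotents are central; $A_e=\{a: aa^{-1}=a^{-1}a=e\}$. An endomorphism $\varphi$ of $A$ is relatively invertible if there are $\bar\varphi\in\mathrm{End}\,A$, $e_\varphi\in E(A)$ with $\bar\varphi\varphi(a)=e_\varphi a$, $\varphi\bar\varphi(a)=\varphi(e_\varphi)a$, $e_\varphi$ the identity of $\bar\varphi(A)$, $\varphi(e_\varphi)$ the identity of $\varphi(A)$. A twisted $S$-module structure on $A$ is $(\alpha,\lambda,f)$ with $\alpha:E(S)\to E(A)$ an isomorphism, $s\mapsto\lambda_s$ relatively invertible endomorphisms, $f:S\times S\to A$ with $f(s,t)\in A_{\alpha(stt^{-1}s^{-1})}$, satisfying (i) $\lambda_e(a)=\alpha(e)a$ ($e\in E(S)$); (ii) $\lambda_s(\alpha(e))=\alpha(ses^{-1})$; (iii) $\lambda_s\lambda_t(a)=f(s,t)\lambda_{st}(a)f(s,t)^{-1}$; (iv) $f(se,e)=\alpha(ses^{-1})$, $f(e,es)=\alpha(ess^{-1})$; (v) $\lambda_s(f(t,u))f(s,tu)=f(s,t)f(st,u)$; Sieben means also $f(s,e)=\alpha(ses^{-1})$, $f(e,s)=\alpha(ess^{-1})$.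 The crossed product $A*_\Lambda S=\{a\delta_s: aa^{-1}=\alpha(ss^{-1})\}$ with $a\delta_s\cdot b\delta_t=a\lambda_s(b)f(s,t)\delta_{st}$ is an inverse semigroup, an extension of $A$ by $S$ via $i(a)=a\delta_{\alpha^{-1}(aa^{-1})}$ and $j(a\delta_s)=s$. For a transversal $\rho$ of $j$ ($j\circ\rho=\mathrm{id}$, $\rho(E(S))\subseteq E(A*_\Lambda S)$), the induced structure is $(\alpha_\rho,\lambda_\rho,f_\rho)$: $\alpha_\rho=i^{-1}\circ\rho|_{E(S)}$, $(\lambda_\rho)_s(a)=i^{-1}(\rho(s)i(a)\rho(s)^{-1})$, $f_\rho(s,t)$ the unique element of $A_{\alpha_\rho(stt^{-1}s^{-1})}$ with $\rho(s)\rho(t)=i(f_\rho(s,t))\rho(st)$. *)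

From Stdlib Require Import ClassicalEpsilon.

Set Implicit Arguments.

Section Semigroups.
Variable T : Type.
Variable mul : T -> T -> T.
Variable inv : T -> T.

Definition is_inverse (x y : T) : Prop :=
  mul (mul x y) x = x /\ mul (mul y x) y = y.

Definition inverse_semigroup : Prop :=
  (forall x y z, mul (mul x y) z = mul x (mul y z)) /\
  (forall x, is_inverse x (inv x)) /\
  (forall x y, is_inverse x y -> y = inv x).

Definition idem (e : T) : Prop := mul e e = e.

Definition semilattice_of_groups : Prop :=
  inverse_semigroup /\ (forall e a, idem e -> mul e a = mul a e).

Definition in_group (e a : T) : Prop := mul a (inv a) = e /\ mul (inv a) a = e.

Definition endomorphism (phi : T -> T) : Prop :=
  forall a b, phi (mul a b) = mul (phi a) (phi b).

Definition identity_of_image (psi : T -> T) (e : T) : Prop :=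
  (exists a, psi a = e) /\ (forall a, mul e (psi a) = psi a /\ mul (psi a) e = psi a).

Definition relatively_invertible (phi : T -> T) : Prop :=
  exists (phibar : T -> T) (ephi : T),
    endomorphism phibar /\ idem ephi /\
    (forall a, phibar (phi a) = mul ephi a) /\
    (forall a, phi (phibar a) = mul (phi ephi) a) /\
    identity_of_image phibar ephi /\
    identity_of_image phi (phi ephi).
End Semigroups.

Section Twisted.
Variables (A S : Type).
Variables (mulA : A -> A -> A) (invA : A -> A).
Variables (mulS : S -> S -> S) (invS : S -> S).
Variable alpha : S -> A.
Variable lam : S -> A -> A.
Variable f : S -> S -> A.

Local Notation "x * y" := (mulS x y).
Local Notation "a ** b" := (mulA a b) (at level 40, left associativity).

Definition idem_iso : Prop :=
  (forall e, idem mulS e -> idem mulA (alpha e)) /\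
  (forall e e', idem mulS e -> idem mulS e' -> alpha (e * e') = alpha e ** alpha e') /\
  (forall e e', idem mulS e -> idem mulS e' -> alpha e = alpha e' -> e = e') /\
  (forall g, idem mulA g -> exists e, idem mulS e /\ alpha e = g).

Definition twisted_module : Prop :=
  idem_iso /\
  (forall s, endomorphism mulA (lam s) /\ relatively_invertible mulA (lam s)) /\
  (forall s t, in_group mulA invA (alpha ((s * t) * (invS t * invS s))) (f s t)) /\
  (forall e a, idem mulS e -> lam e a = alpha e ** a) /\
  (forall s e, idem mulS e -> lam s (alpha e) = alpha ((s * e) * invS s)) /\
  (forall s t a, lam s (lam t a) = (f s t ** lam (s * t) a) ** invA (f s t)) /\
  (forall s e, idem mulS e ->
     f (s * e) e = alpha ((s * e) * invS s) /\ f e (e * s) = alpha ((e * s) * invS s)) /\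
  (forall s t u, lam s (f t u) ** f s (t * u) = f s t ** f (s * t) u).

Definition sieben_twisted_module : Prop :=
  twisted_module /\
  (forall s e, idem mulS e ->
     f s e = alpha ((s * e) * invS s) /\ f e s = alpha ((e * s) * invS s)).

(* The crossed product A *_Lambda S: pairs (a, s) (standing for a delta_s)
   with a a^-1 = alpha(s s^-1). *)
Definition in_cp (x : A * S) : Prop :=
  fst x ** invA (fst x) = alpha (snd x * invS (snd x)).

Definition cp_mul (x y : A * S) : A * S :=
  ((fst x ** lam (snd x) (fst y)) ** f (snd x) (snd y), snd x * snd y).

Definition cp_inv (x : A * S) : A * S :=
  epsilon (inhabits x) (fun y => in_cp y /\ is_inverse cp_mul x y).

(* alpha^-1 : E(A) -> E(S) (s0 is only used to witness that S is inhabited) *)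
Definition alpha_inv (s0 : S) (g : A) : S :=
  epsilon (inhabits s0) (fun e => idem mulS e /\ alpha e = g).

Definition cp_i (s0 : S) (a : A) : A * S := (a, alpha_inv s0 (a ** invA a)).

Definition cp_j (x : A * S) : S := snd x.

Definition cp_i_inv (x : A * S) : A :=
  epsilon (inhabits (fst x)) (fun b => cp_i (snd x) b = x).

Definition rho (s : S) : A * S := (alpha (s * invS s), s).

Definition alpha_rho (e : S) : A := cp_i_inv (rho e).

Definition lam_rho (s : S) (a : A) : A :=
  cp_i_inv (cp_mul (cp_mul (rho s) (cp_i s a)) (cp_inv (rho s))).

Definition f_rho (s t : S) : A :=
  epsilon (inhabits (fst (rho s)))
    (fun c => in_group mulA invA (alpha_rho ((s * t) * (invS t * invS s))) c /\
              cp_mul (rho s) (rho t) = cp_mul (cp_i s c) (rho (s * t))).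
End Twisted.

(* In A *_Lambda S one computes rho(s) rho(t) = f(s,t) delta_st and
   i(c) rho(st) = c delta_st, which gives f_rho = f, and rho(e) = i(alpha(e)),
   which gives alpha_rho = alpha.  For lambda_rho: rho(s) i(a) = lambda_s(a)
   delta_se where alpha(e) = a a^-1, and every inverse b delta_{s^-1} of rho(s)
   satisfies alpha(ss^-1) lambda_s(b) f(s,s^-1) = alpha(ss^-1).  Multiplying
   by it contributes lambda_se(b) f(se,s^-1), which agrees with
   lambda_s(b) f(s,s^-1) up to the central idempotent alpha(ses^-1) (by (iii),
   the cocycle identity (v) and the Sieben normalisation); since alpha(ses^-1)
   is the identity of lambda_s(a), the factor is absorbed. *)

From Stdlib Require Import ClassicalEpsilon.
Set Implicit Arguments.

Section InverseSemigroup.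
Variables (T : Type) (mul : T -> T -> T) (inv : T -> T).
Hypothesis HI : inverse_semigroup mul inv.
Local Notation "x * y" := (mul x y).

Lemma mul_assoc x y z : x * y * z = x * (y * z).
Proof. apply HI. Qed.

Lemma mul_inv_mul x : x * (inv x * x) = x.
Proof. rewrite <- mul_assoc. apply (proj1 (proj2 HI) x). Qed.

Lemma inv_mul_inv x : inv x * (x * inv x) = inv x.
Proof. rewrite <- mul_assoc. apply (proj1 (proj2 HI) x). Qed.

Lemma mul_inv_mul_r x y : x * (inv x * (x * y)) = x * y.
Proof. rewrite <- (mul_assoc (inv x)), <- mul_assoc, mul_inv_mul. reflexivity. Qed.

Lemma inv_mul_inv_r x y : inv x * (x * (inv x * y)) = inv x * y.
Proof. rewrite <- (mul_assoc x), <- mul_assoc, inv_mul_inv. reflexivity. Qed.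

Lemma inverse_unique x y : x * (y * x) = x -> y * (x * y) = y -> y = inv x.
Proof. intros H1 H2. apply (proj2 (proj2 HI)). split; rewrite mul_assoc; assumption. Qed.

Lemma inv_inv x : inv (inv x) = x.
Proof. symmetry. apply inverse_unique; [apply inv_mul_inv | apply mul_inv_mul]. Qed.

Lemma inv_idem e : idem mul e -> inv e = e.
Proof. intro He. symmetry. apply inverse_unique; rewrite He; exact He. Qed.

Lemma idem_mul_l e y : idem mul e -> e * (e * y) = e * y.
Proof. intro He. rewrite <- mul_assoc, He. reflexivity. Qed.

Lemma idem_mul_inv x : idem mul (x * inv x).
Proof. unfold idem. rewrite mul_assoc, mul_inv_mul_r. reflexivity. Qed.

Lemma idem_inv_mul x : idem mul (inv x * x).
Proof. unfold idem. rewrite mul_assoc, inv_mul_inv_r. reflexivity. Qed.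

(* The inverse x of e * g is an idempotent equal to g * x * e; being its own
   inverse, e * g = inv x = x. *)
Lemma idem_mul e g : idem mul e -> idem mul g -> idem mul (e * g).
Proof.
  intros He Hg.
  set (x := inv (e * g)).
  assert (Hx : g * (x * e) = x).
  { apply inverse_unique.
    - rewrite !mul_assoc, (idem_mul_l _ Hg), (idem_mul_l _ He).
      rewrite <- (mul_assoc e g (x * (e * g))). apply mul_inv_mul.
    - rewrite !mul_assoc, (idem_mul_l _ He), (idem_mul_l _ Hg).
      rewrite <- (mul_assoc e g (x * e)). unfold x. rewrite inv_mul_inv_r. reflexivity. }
  assert (Hx_idem : idem mul x).
  { unfold idem. rewrite <- Hx, !mul_assoc, <- (mul_assoc e g (x * e)).
    unfold x. rewrite inv_mul_inv_r. reflexivity. }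
  replace (e * g) with x; [exact Hx_idem |].
  rewrite <- (inv_idem Hx_idem). apply inv_inv.
Qed.

Lemma idem_comm e g : idem mul e -> idem mul g -> e * g = g * e.
Proof.
  intros He Hg.
  assert (Heg : idem mul (e * g)) by (apply idem_mul; assumption).
  assert (Hge : idem mul (g * e)) by (apply idem_mul; assumption).
  unfold idem in Heg, Hge. rewrite !mul_assoc in Heg, Hge.
  assert (E : g * e = inv (e * g)).
  { apply inverse_unique; rewrite !mul_assoc.
    - rewrite (idem_mul_l _ Hg), (idem_mul_l _ He). exact Heg.
    - rewrite (idem_mul_l _ He), (idem_mul_l _ Hg). exact Hge. }
  rewrite E, inv_idem; [reflexivity | apply idem_mul; assumption].
Qed.

Lemma inv_mul x y : inv (x * y) = inv y * inv x.
Proof.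
  pose proof (idem_comm (idem_mul_inv y) (idem_inv_mul x)) as C.
  symmetry. apply inverse_unique; rewrite !mul_assoc.
  - transitivity (x * (y * inv y * (inv x * x) * y)); [rewrite !mul_assoc; reflexivity |].
    rewrite C, !mul_assoc, mul_inv_mul_r, mul_inv_mul. reflexivity.
  - transitivity (inv y * (inv x * x * (y * inv y) * inv x)); [rewrite !mul_assoc; reflexivity |].
    rewrite <- C, !mul_assoc, inv_mul_inv_r, inv_mul_inv. reflexivity.
Qed.

Lemma idem_conj s e : idem mul e -> idem mul (s * e * inv s).
Proof.
  intro He. replace (s * e * inv s) with (s * e * inv (s * e)); [apply idem_mul_inv |].
  rewrite inv_mul, (inv_idem He), !mul_assoc, (idem_mul_l _ He). reflexivity.
Qed.

End InverseSemigroup.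

Section CrossedProduct.
Variables (A S : Type) (mulA : A -> A -> A) (invA : A -> A)
  (mulS : S -> S -> S) (invS : S -> S)
  (alpha : S -> A) (lam : S -> A -> A) (f : S -> S -> A).
Hypothesis HA : semilattice_of_groups mulA invA.
Hypothesis HS : inverse_semigroup mulS invS.
Hypothesis HT : sieben_twisted_module mulA invA mulS invS alpha lam f.
Let HAi : inverse_semigroup mulA invA := proj1 HA.

Local Notation "x * y" := (mulS x y).
Local Notation "a ** b" := (mulA a b) (at level 40, left associativity).
Local Notation cmul := (cp_mul mulA mulS lam f).
Local Notation ρ := (rho mulS invS alpha).
Local Notation ι := (cp_i mulA invA mulS alpha).
Local Notation grp := (in_group mulA invA).

Lemma idem_central e a : idem mulA e -> e ** a = a ** e.
Proof. exact (proj2 HA e a). Qed.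

Lemma idem_mul_left_comm e a b : idem mulA e -> e ** (a ** b) = a ** (e ** b).
Proof. intro He. rewrite <- !(mul_assoc HAi), (idem_central a He). reflexivity. Qed.

Lemma in_group_idem_l g x : grp g x -> g ** x = x.
Proof. intros [H _]. rewrite <- H, (mul_assoc HAi). apply (mul_inv_mul HAi). Qed.

Lemma in_group_idem_r g x : grp g x -> x ** g = x.
Proof. intros [_ H]. rewrite <- H. apply (mul_inv_mul HAi). Qed.

Lemma in_group_inv g x : grp g x -> grp g (invA x).
Proof. intros [H1 H2]. split; rewrite (inv_inv HAi); assumption. Qed.

Local Ltac twisted_axioms :=
  destruct HT as [[[alpha_idem' [alpha_mul' [alpha_inj' alpha_surj']]]
    [lam_end [f_grp [lam_i [lam_ii [lam_iii [_ lam_v]]]]]]] normalised].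

Lemma alpha_idem e : idem mulS e -> idem mulA (alpha e).
Proof. twisted_axioms; auto. Qed.

Lemma alpha_mul e e' : idem mulS e -> idem mulS e' -> alpha (e * e') = alpha e ** alpha e'.
Proof. twisted_axioms; auto. Qed.

Lemma alpha_inj e e' : idem mulS e -> idem mulS e' -> alpha e = alpha e' -> e = e'.
Proof. twisted_axioms; auto. Qed.

Lemma alpha_surj g : idem mulA g -> exists e, idem mulS e /\ alpha e = g.
Proof. twisted_axioms; auto. Qed.

Lemma lam_mul s a b : lam s (a ** b) = lam s a ** lam s b.
Proof. twisted_axioms. apply (lam_end s). Qed.

Lemma lam_inv s a : lam s (invA a) = invA (lam s a).
Proof.
  apply (inverse_unique HAi); rewrite <- !lam_mul.
  - rewrite (mul_inv_mul HAi). reflexivity.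
  - rewrite (inv_mul_inv HAi). reflexivity.
Qed.

Lemma f_in_group s t : grp (alpha ((s * t) * (invS t * invS s))) (f s t).
Proof. twisted_axioms; auto. Qed.

Lemma lam_idem e a : idem mulS e -> lam e a = alpha e ** a.
Proof. twisted_axioms; auto. Qed.

Lemma lam_alpha s e : idem mulS e -> lam s (alpha e) = alpha (s * e * invS s).
Proof. twisted_axioms; auto. Qed.

Lemma lam_lam s t a : lam s (lam t a) = f s t ** lam (s * t) a ** invA (f s t).
Proof. twisted_axioms; auto. Qed.

Lemma f_cocycle s t u : lam s (f t u) ** f s (t * u) = f s t ** f (s * t) u.
Proof. twisted_axioms; auto. Qed.

Lemma f_idem_r s e : idem mulS e -> f s e = alpha (s * e * invS s).
Proof. twisted_axioms. intro He. apply (normalised s e He). Qed.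

Lemma f_idem_l s e : idem mulS e -> f e s = alpha (e * s * invS s).
Proof. twisted_axioms. intro He. apply (normalised s e He). Qed.

Lemma alpha_inv_alpha s0 e : idem mulS e -> alpha_inv mulS alpha s0 (alpha e) = e.
Proof.
  intro He. unfold alpha_inv.
  destruct (epsilon_spec (inhabits s0) (fun e' => idem mulS e' /\ alpha e' = alpha e)
     (ex_intro _ e (conj He eq_refl))) as [He' E].
  apply alpha_inj; assumption.
Qed.

Lemma cp_i_of_group s0 e c : idem mulS e -> c ** invA c = alpha e -> ι s0 c = (c, e).
Proof. intros He Hc. unfold cp_i. rewrite Hc, alpha_inv_alpha; trivial. Qed.

Lemma cp_i_inv_pair e c : idem mulS e -> c ** invA c = alpha e ->
  cp_i_inv mulA invA mulS alpha (c, e) = c.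
Proof.
  intros He Hc. unfold cp_i_inv; simpl.
  exact (f_equal fst
    (epsilon_spec (inhabits c) (fun b => ι e b = (c, e))
       (ex_intro _ c (cp_i_of_group e He Hc)))).
Qed.

Lemma rho_in_cp s : in_cp mulA invA mulS invS alpha (ρ s).
Proof.
  unfold in_cp, rho; simpl.
  pose proof (alpha_idem (idem_mul_inv HS s)) as H.
  rewrite (inv_idem HAi H). exact H.
Qed.

Lemma rho_of_idem e : idem mulS e -> ρ e = (alpha e, e).
Proof. intro He. unfold rho. rewrite (inv_idem HS He), He. reflexivity. Qed.

Lemma rho_idem e : idem mulS e -> idem cmul (ρ e).
Proof.
  intro He. unfold idem. rewrite (rho_of_idem He). unfold cp_mul; simpl.
  rewrite (f_idem_r e He), (lam_idem _ He), (inv_idem HS He), !He, !(alpha_idem He).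
  reflexivity.
Qed.

Lemma rho_mul_rho s t : cmul (ρ s) (ρ t) = (f s t, s * t).
Proof.
  set (g := s * t * (invS t * invS s)).
  assert (Hg : idem mulS g) by (unfold g; rewrite <- (inv_mul HS); apply (idem_mul_inv HS)).
  unfold cp_mul, rho; simpl. rewrite (lam_alpha s (idem_mul_inv HS t)).
  replace (s * (t * invS t) * invS s) with g by (unfold g; rewrite !(mul_assoc HS); reflexivity).
  rewrite <- (alpha_mul (idem_mul_inv HS s) Hg).
  replace (s * invS s * g) with g
    by (unfold g; rewrite !(mul_assoc HS), (mul_inv_mul_r HS); reflexivity).
  pose proof (in_group_idem_l (f_in_group s t)) as Hf. fold g in Hf. rewrite Hf. reflexivity.
Qed.

Lemma cp_i_mul_rho s0 u c : grp (alpha (u * invS u)) c -> cmul (ι s0 c) (ρ u) = (c, u).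
Proof.
  intro Hc. set (e := u * invS u) in Hc.
  assert (He : idem mulS e) by apply (idem_mul_inv HS).
  rewrite (cp_i_of_group s0 He (proj1 Hc)).
  unfold cp_mul, rho; simpl. fold e.
  rewrite (lam_idem _ He), (f_idem_l _ He), (alpha_idem He).
  replace (e * u) with u by (unfold e; rewrite (mul_assoc HS), (mul_inv_mul HS); reflexivity).
  fold e. rewrite !(in_group_idem_r Hc). reflexivity.
Qed.

Lemma alpha_rho_of_idem e : idem mulS e -> alpha_rho mulA invA mulS invS alpha e = alpha e.
Proof.
  intro He. unfold alpha_rho. rewrite (rho_of_idem He).
  apply cp_i_inv_pair; [exact He |].
  rewrite (inv_idem HAi (alpha_idem He)). apply alpha_idem, He.
Qed.

Lemma f_rho_eq s t : f_rho mulA invA mulS invS alpha lam f s t = f s t.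
Proof.
  assert (Hst : s * t * (invS t * invS s) = s * t * invS (s * t))
    by (rewrite (inv_mul HS); reflexivity).
  assert (Hg : idem mulS (s * t * (invS t * invS s))) by (rewrite Hst; apply (idem_mul_inv HS)).
  unfold f_rho. rewrite (alpha_rho_of_idem Hg), rho_mul_rho, Hst.
  set (P := fun c => grp (alpha (s * t * invS (s * t))) c /\
                     (f s t, s * t) = cmul (ι s c) (ρ (s * t))).
  assert (Hf : P (f s t)).
  { pose proof (f_in_group s t) as Hf. rewrite Hst in Hf.
    split; [exact Hf | rewrite (cp_i_mul_rho s Hf); reflexivity]. }
  destruct (epsilon_spec (inhabits (fst (ρ s))) P (ex_intro _ _ Hf)) as [Hc E].
  rewrite (cp_i_mul_rho s Hc) in E. injection E as E. symmetry. exact E.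
Qed.

Lemma lam_range s e a : idem mulS e -> a ** invA a = alpha e ->
  lam s a ** invA (lam s a) = alpha (s * e * invS s) /\
  alpha (s * e * invS s) ** lam s a = lam s a.
Proof.
  intros He Ha. rewrite <- (lam_alpha s He), <- Ha, <- lam_inv, <- !lam_mul.
  split; [reflexivity |]. rewrite (mul_assoc HAi), (mul_inv_mul HAi). reflexivity.
Qed.

Lemma rho_mul_cp_i s0 s e a : idem mulS e -> a ** invA a = alpha e ->
  cmul (ρ s) (ι s0 a) = (lam s a, s * e).
Proof.
  intros He Ha. set (g := s * e * invS s).
  assert (Hg : idem mulA (alpha g)) by apply (alpha_idem (idem_conj HS s He)).
  destruct (lam_range s He Ha) as [_ Hl]. fold g in Hl.
  rewrite (cp_i_of_group s0 He Ha). unfold cp_mul, rho; simpl.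
  rewrite (f_idem_r s He). fold g.
  rewrite (mul_assoc HAi), <- (idem_central _ Hg), <- (mul_assoc HAi).
  assert (E : alpha (s * invS s) ** alpha g = alpha g).
  { unfold g. rewrite <- (alpha_mul (idem_mul_inv HS s) (idem_conj HS s He)).
    rewrite !(mul_assoc HS), (mul_inv_mul_r HS). reflexivity. }
  rewrite E, Hl. reflexivity.
Qed.

Lemma lam_mul_idem s e b : idem mulS e ->
  alpha (s * e * invS s) ** lam (s * e) b = alpha (s * e * invS s) ** lam s b.
Proof.
  intro He. set (g := s * e * invS s).
  assert (Hg : idem mulA (alpha g)) by apply (alpha_idem (idem_conj HS s He)).
  pose proof (lam_lam s e b) as H.
  rewrite (lam_idem _ He), lam_mul, (lam_alpha s He), (f_idem_r s He) in H. fold g in H.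
  rewrite (inv_idem HAi Hg) in H. rewrite H.
  rewrite (mul_assoc HAi), <- (idem_central _ Hg), <- (mul_assoc HAi), Hg. reflexivity.
Qed.

(* Two instances of the cocycle identity, at (s, e, s^-1) and (s, s^-1, ses^-1),
   both simplified by the normalisation f(s, idempotent) = alpha(...). *)
Lemma f_mul_idem s e : idem mulS e ->
  alpha (s * e * invS s) ** f (s * e) (invS s) = alpha (s * e * invS s) ** f s (invS s).
Proof.
  intro He. set (g := s * e * invS s).
  assert (Hg : idem mulS g) by apply (idem_conj HS s He).
  assert (Ea : alpha g ** f s (e * invS s) = alpha g ** f (s * e) (invS s)).
  { pose proof (f_cocycle s e (invS s)) as H.
    rewrite (f_idem_l _ He), (inv_inv HS), (f_idem_r s He) in H. fold g in H.
    assert (Hi : idem mulS (e * invS s * s)).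
    { rewrite (mul_assoc HS). apply (idem_mul HS He (idem_inv_mul HS s)). }
    rewrite (lam_alpha s Hi) in H.
    replace (s * (e * invS s * s) * invS s) with g in H
      by (unfold g; rewrite !(mul_assoc HS), (inv_mul_inv HS); reflexivity).
    exact H. }
  assert (Eb : alpha g ** f s (e * invS s) = f s (invS s) ** alpha g).
  { pose proof (f_cocycle s (invS s) g) as H.
    rewrite (f_idem_r _ Hg), (inv_inv HS), (f_idem_r _ Hg) in H.
    assert (Ecomm : invS s * g * s = e * (invS s * s)).
    { unfold g. transitivity (invS s * s * e * (invS s * s));
        [rewrite !(mul_assoc HS); reflexivity |].
      rewrite (idem_comm HS (idem_inv_mul HS s) He), !(mul_assoc HS), (inv_mul_inv_r HS).
      reflexivity. }
    rewrite Ecomm, (lam_alpha s (idem_mul HS He (idem_inv_mul HS s))) in H.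
    replace (s * (e * (invS s * s)) * invS s) with g in H
      by (unfold g; rewrite !(mul_assoc HS), (inv_mul_inv HS); reflexivity).
    replace (s * invS s * g * invS (s * invS s)) with g in H
      by (rewrite (inv_idem HS (idem_mul_inv HS s)); unfold g;
          rewrite !(mul_assoc HS), (mul_inv_mul_r HS), (inv_mul_inv HS); reflexivity).
    replace (invS s * g) with (e * invS s) in H; [exact H |].
    unfold g. transitivity (invS s * s * e * invS s); [| rewrite !(mul_assoc HS); reflexivity].
    rewrite (idem_comm HS (idem_inv_mul HS s) He), !(mul_assoc HS), (inv_mul_inv HS).
    reflexivity. }
  rewrite <- Ea, Eb. symmetry. apply (idem_central _ (alpha_idem Hg)).
Qed.

Lemma f_inv_in_group s : grp (alpha (s * invS s)) (f s (invS s)).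
Proof.
  pose proof (f_in_group s (invS s)) as H.
  rewrite (inv_inv HS), (idem_mul_inv HS s) in H. exact H.
Qed.

Lemma lam_f_inv s : lam s (f (invS s) s) = f s (invS s).
Proof.
  assert (He2 : idem mulS (invS s * s)) by apply (idem_inv_mul HS).
  assert (Ee : s * (invS s * s) * invS s = s * invS s)
    by (rewrite !(mul_assoc HS), (mul_inv_mul_r HS); reflexivity).
  assert (Es : s * invS s * s = s) by (rewrite (mul_assoc HS); apply (mul_inv_mul HS)).
  pose proof (f_inv_in_group (invS s)) as Hf'. rewrite (inv_inv HS) in Hf'.
  destruct (lam_range s He2 (proj1 Hf')) as [_ Hl]. rewrite Ee in Hl.
  pose proof (f_cocycle s (invS s) s) as H.
  rewrite (f_idem_r s He2), (f_idem_l s (idem_mul_inv HS s)), Ee, Es in H.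
  rewrite (in_group_idem_r (f_inv_in_group s)),
    <- (idem_central _ (alpha_idem (idem_mul_inv HS s))), Hl in H.
  exact H.
Qed.

Lemma rho_mul_inverse s : cmul (ρ s) (invA (f (invS s) s), invS s) = ρ (s * invS s).
Proof.
  rewrite (rho_of_idem (idem_mul_inv HS s)). unfold cp_mul, rho; simpl.
  rewrite lam_inv, lam_f_inv, (mul_assoc HAi), (proj2 (f_inv_in_group s)).
  rewrite (alpha_idem (idem_mul_inv HS s)). reflexivity.
Qed.

Lemma inverse_mul_rho s : cmul (invA (f (invS s) s), invS s) (ρ s) = ρ (invS s * s).
Proof.
  pose proof (f_inv_in_group (invS s)) as Hf. rewrite (inv_inv HS) in Hf.
  rewrite (rho_of_idem (idem_inv_mul HS s)). unfold cp_mul, rho; simpl.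
  rewrite (lam_alpha _ (idem_mul_inv HS s)), (inv_inv HS), !(mul_assoc HS), (inv_mul_inv_r HS).
  rewrite (in_group_idem_r (in_group_inv Hf)), (proj2 Hf). reflexivity.
Qed.

(* cp_inv chooses some inverse of rho(s); this explicit one shows that the
   choice is specified. *)
Lemma rho_has_inverse s : exists y, in_cp mulA invA mulS invS alpha y /\ is_inverse cmul (ρ s) y.
Proof.
  pose proof (f_inv_in_group (invS s)) as Hf. rewrite (inv_inv HS) in Hf.
  exists (invA (f (invS s) s), invS s). split; [| split].
  - unfold in_cp; simpl. rewrite (inv_inv HAi), (inv_inv HS). exact (proj2 Hf).
  - rewrite rho_mul_inverse, rho_mul_rho, (f_idem_l s (idem_mul_inv HS s)).
    replace (s * invS s * s) with s by (rewrite (mul_assoc HS), (mul_inv_mul HS); reflexivity).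
    reflexivity.
  - rewrite inverse_mul_rho, (rho_of_idem (idem_inv_mul HS s)).
    unfold cp_mul; simpl.
    rewrite (lam_idem _ (idem_inv_mul HS s)), (f_idem_l _ (idem_inv_mul HS s)), (inv_inv HS).
    replace (invS s * s * invS s) with (invS s)
      by (rewrite (mul_assoc HS), (inv_mul_inv HS); reflexivity).
    rewrite !(in_group_idem_l (in_group_inv Hf)), (in_group_idem_r (in_group_inv Hf)).
    reflexivity.
Qed.

Lemma rho_inverse_shape s y : is_inverse cmul (ρ s) y ->
  snd y = invS s /\ alpha (s * invS s) ** lam s (fst y) ** f s (invS s) = alpha (s * invS s).
Proof.
  destruct y as [b u]. intros [H1 H2]. unfold cp_mul, rho in H1, H2; simpl in H1, H2.
  injection H1 as H1 Hsu. injection H2 as _ Hus.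
  assert (Hu : u = invS s) by (apply (inverse_unique HS); rewrite <- (mul_assoc HS); assumption).
  subst u. split; [reflexivity |]. simpl.
  set (e1 := s * invS s) in *.
  assert (He1 : idem mulS e1) by apply (idem_mul_inv HS).
  assert (Hae1 : idem mulA (alpha e1)) by apply (alpha_idem He1).
  assert (Ee1s : e1 * s = s) by (unfold e1; rewrite (mul_assoc HS); apply (mul_inv_mul HS)).
  rewrite (lam_idem _ He1), (f_idem_l _ He1), Ee1s in H1. fold e1 in H1.
  rewrite Hae1, (mul_assoc HAi), Hae1 in H1.
  rewrite <- H1 at 2.
  rewrite <- (idem_central _ Hae1), !(mul_assoc HAi), (idem_mul_l HAi _ Hae1).
  reflexivity.
Qed.

Lemma lam_f_inverse_absorbed s e b L : idem mulS e ->
  alpha (s * invS s) ** lam s b ** f s (invS s) = alpha (s * invS s) ->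
  alpha (s * e * invS s) ** L = L ->
  L ** lam (s * e) b ** f (s * e) (invS s) = L.
Proof.
  intros He Hb HL.
  assert (Hg : idem mulA (alpha (s * e * invS s))) by apply (alpha_idem (idem_conj HS s He)).
  assert (Hge : alpha (s * e * invS s) ** alpha (s * invS s) = alpha (s * e * invS s)).
  { rewrite <- (alpha_mul (idem_conj HS s He) (idem_mul_inv HS s)), !(mul_assoc HS).
    rewrite (inv_mul_inv HS). reflexivity. }
  assert (Hkey : alpha (s * e * invS s) ** (lam (s * e) b ** f (s * e) (invS s))
                 = alpha (s * e * invS s)).
  { rewrite <- (mul_assoc HAi), (lam_mul_idem s b He), (mul_assoc HAi).
    rewrite (idem_mul_left_comm _ _ Hg), (f_mul_idem s He), <- (idem_mul_left_comm _ _ Hg).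
    rewrite <- Hge at 1. rewrite (mul_assoc HAi), <- (mul_assoc HAi (alpha (s * invS s))), Hb.
    exact Hge. }
  rewrite <- HL at 1.
  rewrite (idem_central _ Hg), !(mul_assoc HAi), Hkey.
  rewrite <- (idem_central _ Hg). exact HL.
Qed.

Lemma lam_rho_eq s a : lam_rho mulA invA mulS invS alpha lam f s a = lam s a.
Proof.
  destruct (epsilon_spec (inhabits (ρ s))
    (fun y => in_cp mulA invA mulS invS alpha y /\ is_inverse cmul (ρ s) y)
    (rho_has_inverse s)) as [_ Hinv].
  fold (cp_inv mulA invA mulS invS alpha lam f (ρ s)) in Hinv.
  destruct (alpha_surj (idem_mul_inv HAi a)) as [e [He Ha]].
  destruct (lam_range s He (eq_sym Ha)) as [HLinv HL].
  unfold lam_rho. rewrite (rho_mul_cp_i s s He (eq_sym Ha)).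
  destruct (cp_inv mulA invA mulS invS alpha lam f (ρ s)) as [b u].
  destruct (rho_inverse_shape Hinv) as [Hu Hb]. simpl in Hu, Hb. subst u.
  unfold cp_mul; simpl. rewrite (lam_f_inverse_absorbed He Hb HL).
  apply cp_i_inv_pair; [apply (idem_conj HS s He) | exact HLinv].
Qed.

End CrossedProduct.

Unset Implicit Arguments.

Theorem corollary3p30 (A S : Type)
  (mulA : A -> A -> A) (invA : A -> A) (mulS : S -> S -> S) (invS : S -> S)
  (alpha : S -> A) (lam : S -> A -> A) (f : S -> S -> A) :
  semilattice_of_groups mulA invA ->
  inverse_semigroup mulS invS ->
  sieben_twisted_module mulA invA mulS invS alpha lam f ->
  (* rho is a transversal of j *)
  ((forall s, in_cp mulA invA mulS invS alpha (rho mulS invS alpha s)) /\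
   (forall s, cp_j (rho mulS invS alpha s) = s) /\
   (forall e, idem mulS e ->
      idem (cp_mul mulA mulS lam f) (rho mulS invS alpha e))) /\
  (* the induced structure is Lambda itself *)
  (forall e, idem mulS e -> alpha_rho mulA invA mulS invS alpha e = alpha e) /\
  (forall s a, lam_rho mulA invA mulS invS alpha lam f s a = lam s a) /\
  (forall s t, f_rho mulA invA mulS invS alpha lam f s t = f s t).
Proof.
  intros HA HS HT. split; [split; [| split] | split; [| split]].
  - intro s. eapply rho_in_cp; eassumption.
  - reflexivity.
  - intros e He. eapply rho_idem; eassumption.
  - intros e He. eapply alpha_rho_of_idem; eassumption.
  - intros s a. eapply lam_rho_eq; eassumption.
  - intros s t. eapply f_rho_eq; eassumption.
Qed.
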